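(* Let $M$ be the metric space \[M:=\Big\{\Big(a,\tfrac{1}{2^{n}}\Big)\colon a\in[0,1],\ n\in\mathbb{N}\Big\}\cup \Big\{(a,b)\colon a\in\{0,1\},\ b\in\Big[0,\tfrac{1}{2}\Big]\Big\}\subseteq\mathbb{R}^2\] with the metric \[d\big((a,b),(c,e)\big):=\begin{cases} |a-c|, & \text{if }b=e,\\ \min\{a+c,\,2-a-c\}+|b-e|, &\text{if } b\neq e, \end{cases}\] and base point $(0,0)$. Then the Lipschitz-free space $\mathcal{F}(M)$ is not weakly almost square.
   Context: For a pointed metric space $(M,d,0)$, $\mathrm{Lip}_0(M)$ is the Banach space of Lipschitz functions $f\colon M\to\mathbb{R}$ with $f(0)=0$, normed by the best Lipschitz constant. Let $\delta\colon M\to\mathrm{Lip}_0(M)^*$, $\delta_x(f)=f(x)$. The Lipschitz-free space $\mathcal{F}(M)$ is the norm-closed linear span of $\{\delta_x\colon x\in M\}$ in $\mathrm{Lip}_0(M)^*$; its dual is $\mathrm{Lip}_0(M)$. A Banach space $X$ is weakly almost square (WASQ) if for every $x\in S_X$ there is a sequence $(y_i)\subseteq B_X$ with $\|x\pm y_i\|\to 1$, $\|y_i\|\to1$, and $y_i\to0$ weakly. Here $\mathbb{N}=\{1,2,\dots\}$. *)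

From HB Require Import structures.
From mathcomp Require Import all_boot all_order all_algebra.
From mathcomp Require Import all_classical all_reals all_analysis.
Set Implicit Arguments. Unset Strict Implicit. Unset Printing Implicit Defensive.
Import Order.TTheory GRing.Theory Num.Theory.
Import numFieldNormedType.Exports.
Local Open Scope classical_set_scope.
Local Open Scope ring_scope.

Section FreeSpace.
Context (R : realType).

(* The subset M of R^2. N = {1,2,...}. *)
Definition inM (p : R * R) : Prop :=
  (exists (a : R) (n : nat), 0 <= a <= 1 /\ (1 <= n)%N /\ p = (a, (2 ^+ n)^-1))
  \/ ((p.1 = 0 \/ p.1 = 1) /\ 0 <= p.2 <= 2^-1).

Definition Mpt := {p : R * R | inM p}.

Definition distM (p q : R * R) : R :=
  if p.2 == q.2 then `|p.1 - q.1|
  else Num.min (p.1 + q.1) (2 - p.1 - q.1) + `|p.2 - q.2|.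

Definition dM (x y : Mpt) : R := distM (proj1_sig x) (proj1_sig y).

Lemma inM_base : inM (0, 0).
Proof. by right; split; [left | rewrite /= lexx invr_ge0 ler0n]. Qed.

Definition base : Mpt := exist _ (0, 0) inM_base.

Definition lip0 (f : Mpt -> R) : Prop :=
  f base = 0 /\ exists L : R, forall x y, `|f x - f y| <= L * dM x y.

Definition lip1 (f : Mpt -> R) : Prop :=
  f base = 0 /\ forall x y, `|f x - f y| <= dM x y.

(* functionals on Lip_0(M) (only their values on Lip_0(M) matter) *)
Definition Fnl := (Mpt -> R) -> R.

Definition is_dual (mu : Fnl) : Prop :=
  (forall (a : R) f g, lip0 f -> lip0 g ->
     mu (fun x => a * f x + g x) = a * mu f + mu g)
  /\ exists C : R, forall f, lip1 f -> `|mu f| <= C.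

Definition dnorm (mu : Fnl) : R :=
  sup [set r : R | exists f, lip1 f /\ r = `|mu f|].

Definition delta (x : Mpt) : Fnl := fun f => f x.

Definition fadd (mu nu : Fnl) : Fnl := fun f => mu f + nu f.
Definition fscale (a : R) (mu : Fnl) : Fnl := fun f => a * mu f.
Definition fopp (mu : Fnl) : Fnl := fun f => - mu f.

(* F(M): norm-closure of the linear span of the deltas in Lip_0(M)^* *)
Definition in_free (mu : Fnl) : Prop :=
  is_dual mu /\
  forall eps : R, 0 < eps -> exists s : seq (Mpt * R),
    dnorm (fun f => mu f - \sum_(p <- s) p.2 * f p.1) < eps.

Definition free_dual (Phi : Fnl -> R) : Prop :=
  (forall (a : R) mu nu, in_free mu -> in_free nu ->
     Phi (fadd (fscale a mu) nu) = a * Phi mu + Phi nu)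
  /\ exists C : R, forall mu, in_free mu -> `|Phi mu| <= C * dnorm mu.

Definition weakly_null (y : nat -> Fnl) : Prop :=
  forall Phi, free_dual Phi -> (fun i => Phi (y i)) @ \oo --> (0 : R).

Definition free_WASQ : Prop :=
  forall x : Fnl, in_free x -> dnorm x = 1 ->
  exists y : nat -> Fnl,
    (forall i, in_free (y i) /\ dnorm (y i) <= 1) /\
    (fun i => dnorm (fadd x (y i))) @ \oo --> (1 : R) /\
    (fun i => dnorm (fadd x (fopp (y i)))) @ \oo --> (1 : R) /\
    (fun i => dnorm (y i)) @ \oo --> (1 : R) /\
    weakly_null y.

End FreeSpace.

(* Let p = (0, 3/8), q = (1, 3/8) and x = δ_q - δ_p, a norm-one element of F(M).
   Off the two vertical sides every point of M lies on a level 2^-n, at vertical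
   distance at least 1/8 from 3/8.  This makes phi(a, b) = a + (1/2 - a)|3/8 - b|
   a functional norming x which is 1-Lipschitz with room to spare:
     |phi(r) - phi(s)| + min(d(r, s), D(r) + D(s)) / 8 <= d(r, s),
   where D is the distance to {p, q}.  Hence phi + c k stays in the unit ball of
   Lip_0(M) whenever k is 8-Lipschitz, vanishes at p, q and 0, and |c| <= 1/64.
   Now let y have norm close to 1 and be almost annihilated by phi and by two
   bumps centred at p and q.  Correcting a function g that almost norms y by
   multiples of the bumps gives such a k with y(k) still close to 1, so
   (x + y)(phi +- k/64) is close to 1 + 1/64 for one of the signs: ||x + y|| stays
   away from 1, and no weakly null sequence can witness WASQ at x. *)

From HB Require Import structures.
From mathcomp Require Import all_boot all_order all_algebra.
From mathcomp Require Import all_classical all_reals all_analysis.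
From mathcomp Require Import ring lra.
Set Implicit Arguments. Unset Strict Implicit. Unset Printing Implicit Defensive.
Import Order.TTheory GRing.Theory Num.Theory.
Import numFieldNormedType.Exports.
Local Open Scope classical_set_scope.
Local Open Scope ring_scope.

Section FreeSpaceNotWASQ.
Context (R : realType).
Implicit Types (r s : Mpt R) (f g k : Mpt R -> R).

Definition px r : R := (sval r).1.
Definition py r : R := (sval r).2.
Definition gap r : R := `|3/8 - py r|.

Lemma gap_inv_pow2 n : (0 < n)%N -> 1/8 <= `|3/8 - (2 ^+ n)^-1| :> R.
Proof.
case: n => [//|[|[|n]]] _.
- by rewrite expr1 ler0_norm; lra.
- by rewrite -natrX ger0_norm; lra.
have pow8 : 8 <= 2 ^+ n.+3 :> R.
  by rewrite !exprS !mulrA; have := exprn_ege1 n (ler1n R 2); nra.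
have : (2 ^+ n.+3)^-1 <= 1/8 :> R by rewrite mul1r lef_pV2 ?posrE //; lra.
have : 0 <= (2 ^+ n.+3)^-1 :> R by rewrite invr_ge0; lra.
by move=> *; rewrite ger0_norm; lra.
Qed.

Lemma Mpt_bounds r :
  [/\ 0 <= px r <= 1, 0 <= gap r <= 3/8 & [\/ px r = 0, px r = 1 | 1/8 <= gap r]].
Proof.
rewrite /gap /px /py; case: r => [[a b]] /=.
case=> [[a' [n [a01 [n1 [-> ->]]]]]|[/= a01 /andP[b0 b1]]] /=.
  have pow2 : 2 <= 2 ^+ n :> R.
    by case: n n1 => // n _; rewrite exprS; have := exprn_ege1 n (ler1n R 2); nra.
  have : (2 ^+ n)^-1 <= 1/2 :> R by rewrite mul1r lef_pV2 ?posrE //; lra.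
  have : 0 <= (2 ^+ n)^-1 :> R by rewrite invr_ge0; lra.
  move=> *; split=> //; last by apply: Or33; apply: gap_inv_pow2.
  by rewrite normr_ge0 ler_norml; apply/andP; split; lra.
split.
- by case: a01 => ->; lra.
- by rewrite normr_ge0 ler_norml; apply/andP; split; lra.
- by case: a01 => ->; [apply: Or31 | apply: Or32].
Qed.

Lemma inM_left : inM ((0 : R), 3/8).
Proof. by right; split; [left | rewrite /= -[X in _ <= X]mul1r; apply/andP; split; lra]. Qed.

Lemma inM_right : inM ((1 : R), 3/8).
Proof. by right; split; [right | rewrite /= -[X in _ <= X]mul1r; apply/andP; split; lra]. Qed.

Definition left : Mpt R := exist _ _ inM_left.
Definition right : Mpt R := exist _ _ inM_right.

Lemma px_left : px left = 0. Proof. by []. Qed.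
Lemma py_left : py left = 3/8. Proof. by []. Qed.
Lemma px_right : px right = 1. Proof. by []. Qed.
Lemma py_right : py right = 3/8. Proof. by []. Qed.
Lemma px_base : px (base R) = 0. Proof. by []. Qed.

Lemma gap_left : gap left = 0.
Proof. by rewrite /gap py_left subrr normr0. Qed.
Lemma gap_right : gap right = 0.
Proof. by rewrite /gap py_right subrr normr0. Qed.
Lemma gap_base : gap (base R) = 3/8.
Proof. by rewrite /gap /= subr0 ger0_norm //; lra. Qed.

Definition coordE := (px_left, px_right, px_base, gap_left, gap_right, gap_base).

Lemma dM_coord r s : dM r s = if py r == py s then `|px r - px s|
  else Num.min (px r + px s) (2 - px r - px s) + `|py r - py s|.
Proof. by []. Qed.

Lemma dM_ge0 r s : 0 <= dM r s.
Proof.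
have [/andP[a0 a1] _ _] := Mpt_bounds r; have [/andP[c0 c1] _ _] := Mpt_bounds s.
rewrite dM_coord; case: eqP => _ //.
by rewrite addr_ge0 // le_min; apply/andP; split; lra.
Qed.

Lemma dist_left r : dM r left = px r + gap r.
Proof.
have [/andP[a0 a1] _ _] := Mpt_bounds r.
rewrite dM_coord /gap px_left py_left subr0; case: eqP => [->|_].
  by rewrite subrr normr0 addr0 ger0_norm.
by rewrite addr0 min_l 1?distrC //; lra.
Qed.

Lemma dist_right r : dM r right = 1 - px r + gap r.
Proof.
have [/andP[a0 a1] _ _] := Mpt_bounds r.
rewrite dM_coord /gap px_right py_right; case: eqP => [->|_].
  by rewrite subrr normr0 addr0 distrC ger0_norm // subr_ge0.
by rewrite min_r 1?distrC; [congr (_ + _); ring | lra].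
Qed.

Lemma gap_lip r s : `|gap r - gap s| <= `|py r - py s|.
Proof.
rewrite /gap (distrC (py r)).
have <- : 3/8 - py r - (3/8 - py s) = py s - py r by ring.
exact: ler_dist_dist.
Qed.

Lemma dist_left_right_lip r s :
  `|dM r left - dM s left| <= dM r s /\ `|dM r right - dM s right| <= dM r s.
Proof.
have [/andP[a0 a1] _ _] := Mpt_bounds r; have [/andP[c0 c1] _ _] := Mpt_bounds s.
rewrite !dist_left !dist_right dM_coord.
have := gap_lip r s; rewrite /gap; case: eqP => [->|_] gapL.
  have -> : px r + `|3/8 - py s| - (px s + `|3/8 - py s|) = px r - px s by ring.
  have -> : 1 - px r + `|3/8 - py s| - (1 - px s + `|3/8 - py s|) = px s - px r by ring.
  by rewrite distrC.
move: gapL; rewrite ler_norml => /andP[g1 g2].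
have [m|m] := leP (px r + px s) (2 - px r - px s);
  by split; rewrite ler_norml; apply/andP; split; lra.
Qed.

Lemma min_le_args (x y : R) : Num.min x y <= x /\ Num.min x y <= y.
Proof. by rewrite !ge_min !lexx orbT. Qed.

Lemma slack_same_level (a c t : R) :
  0 <= a <= 1 -> 0 <= c <= 1 -> 0 <= t <= 3/8 ->
  [\/ a = 0, a = 1 | 1/8 <= t] -> [\/ c = 0, c = 1 | 1/8 <= t] ->
  `|(a + (1/2 - a) * t) - (c + (1/2 - c) * t)|
    + 1/8 * Num.min `|a - c| (Num.min (a + t) (1 - a + t) + Num.min (c + t) (1 - c + t))
  <= `|a - c|.
Proof.
move=> /andP[a0 a1] /andP[c0 c1] /andP[t0 t1] Pa Pc.
have -> : (a + (1/2 - a) * t) - (c + (1/2 - c) * t) = (a - c) * (1 - t) by ring.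
rewrite normrM (ger0_norm (_ : 0 <= 1 - t)); last by lra.
have [Da1 Da2] := min_le_args (a + t) (1 - a + t).
have [Dc1 Dc2] := min_le_args (c + t) (1 - c + t).
move: Da1 Da2 Dc1 Dc2; set Da := Num.min (a + t) _; set Dc := Num.min (c + t) _.
have [mn1 mn2] := min_le_args `|a - c| (Da + Dc).
move: mn1 mn2; set mn := Num.min _ _ => mn1 mn2 Da1 Da2 Dc1 Dc2.
have [t_big|t_small] := lerP (1/8) t; first by have := normr_ge0 (a - c); nra.
case: Pa => Pa; case: Pc => Pc; try subst a; try subst c;
  rewrite ?subrr ?normr0 ?subr0 ?sub0r ?normrN ?normr1 in mn1 *; lra.
Qed.

Lemma slack_diff_level (a c t t' w : R) :
  0 <= a <= 1 -> 0 <= c <= 1 -> 0 <= t <= 3/8 -> 0 <= t' <= 3/8 -> `|t - t'| <= w ->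
  [\/ a = 0, a = 1 | 1/8 <= t] -> [\/ c = 0, c = 1 | 1/8 <= t'] ->
  `|(a + (1/2 - a) * t) - (c + (1/2 - c) * t')|
    + 1/8 * Num.min (Num.min (a + c) (2 - a - c) + w)
                    (Num.min (a + t) (1 - a + t) + Num.min (c + t') (1 - c + t'))
  <= Num.min (a + c) (2 - a - c) + w.
Proof.
move=> /andP[a0 a1] /andP[c0 c1] /andP[t0 t1] /andP[t'0 t'1] /ler_normlP[tw1 tw2] Pa Pc.
move: (min_le_args (a + t) (1 - a + t)) (min_le_args (c + t') (1 - c + t')).
set Da := Num.min (a + t) _; set Dc := Num.min (c + t') _.
move: (min_le_args (Num.min (a + c) (2 - a - c) + w) (Da + Dc)).
set mn := Num.min _ (Da + Dc).
rewrite -lerBrDr ler_norml.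
have [m|m] := leP (a + c) (2 - a - c) => -[mn1 mn2] [Da1 Da2] [Dc1 Dc2];
  apply/andP; split; case: Pa => Pa; case: Pc => Pc; try subst a; try subst c; nra.
Qed.

Definition phi0 r : R := px r + (1/2 - px r) * gap r.
Definition phi r : R := phi0 r - phi0 (base R).
Definition dist_ends r : R := Num.min (dM r left) (dM r right).

Lemma phi0_slack r s :
  `|phi0 r - phi0 s| + 1/8 * Num.min (dM r s) (dist_ends r + dist_ends s) <= dM r s.
Proof.
have [a01 gr Pr] := Mpt_bounds r; have [c01 gs Ps] := Mpt_bounds s.
rewrite /dist_ends !dist_left !dist_right /phi0 dM_coord.
case: eqP => [same|_].
  have gap_rs : gap r = gap s by rewrite /gap same.
  by rewrite gap_rs in Pr *; apply: slack_same_level.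
by apply: slack_diff_level; rewrite ?gap_lip.
Qed.

Lemma dist_ends_ge0 r : 0 <= dist_ends r.
Proof. by rewrite le_min !dM_ge0. Qed.

Section Perturbation.
Variables (k : Mpt R -> R) (L : R).
Hypothesis k_lip : forall r s, `|k r - k s| <= L * dM r s.
Hypotheses (k_left : k left = 0) (k_right : k right = 0).

Lemma lip_dist_ends r : `|k r| <= L * dist_ends r.
Proof.
rewrite -[k r]subr0 /dist_ends.
by have [_|_] := leP (dM r left) (dM r right); [rewrite -k_left | rewrite -k_right].
Qed.

Lemma lip_min_dist_ends r s :
  `|k r - k s| <= L * Num.min (dM r s) (dist_ends r + dist_ends s).
Proof.
have [_|_] := leP (dM r s) (dist_ends r + dist_ends s); first exact: k_lip.
by rewrite mulrDr (le_trans (ler_distD 0 _ _)) // sub0r normrN subr0 lerD ?lip_dist_ends.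
Qed.

Lemma phi_perturb_lip1 (c : R) : k (base R) = 0 -> `|c| * L <= 1/8 ->
  lip1 (fun r => phi r + c * k r).
Proof.
move=> k_base cL; split; first by rewrite /phi k_base subrr mulr0 addr0.
move=> r s.
have -> : phi r + c * k r - (phi s + c * k s) = (phi0 r - phi0 s) + c * (k r - k s).
  by rewrite /phi; ring.
have mn0 : 0 <= Num.min (dM r s) (dist_ends r + dist_ends s).
  by rewrite le_min dM_ge0 addr_ge0 ?dist_ends_ge0.
rewrite (le_trans (ler_normD _ _)) // normrM.
have := ler_wpM2l (normr_ge0 c) (lip_min_dist_ends r s).
have := phi0_slack r s.
nra.
Qed.

End Perturbation.

Lemma max0_lip (x y : R) : `|Num.max 0 x - Num.max 0 y| <= `|x - y|.
Proof.
have := ler_norm (x - y); have : y - x <= `|x - y| by rewrite distrC ler_norm.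
by have [?|?] := leP 0 x; have [?|?] := leP 0 y; rewrite ler_norml => *; apply/andP; split; lra.
Qed.

Definition bump (c : Mpt R) r : R := Num.max 0 (1/4 - dM r c).

Lemma bump_far c r : 1/4 <= dM r c -> bump c r = 0.
Proof. by move=> far; rewrite /bump max_l // subr_le0. Qed.

Lemma bump_center c : dM c c = 0 -> bump c c = 1/4.
Proof. by move=> dcc; rewrite /bump dcc subr0 max_r //; lra. Qed.

Lemma bump_lip1 c : (forall r s, `|dM r c - dM s c| <= dM r s) ->
  1/4 <= dM (base R) c -> lip1 (bump c).
Proof.
move=> dc_lip far; split; first exact: bump_far.
move=> r s; apply: le_trans (max0_lip _ _) _.
have -> : 1/4 - dM r c - (1/4 - dM s c) = dM s c - dM r c by ring.
by rewrite distrC.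
Qed.

Definition bounded_fnl (mu : Fnl R) : Prop :=
  exists C : R, forall f, lip1 f -> `|mu f| <= C.

Lemma lip1_zero : lip1 (fun _ : Mpt R => 0).
Proof. by split=> // x y; rewrite subrr normr0 dM_ge0. Qed.

Lemma lip1_lip0 f : lip1 f -> lip0 f.
Proof. by case=> f0 f_lip; split=> //; exists 1 => x y; rewrite mul1r. Qed.

Lemma lip0_comb (a : R) f g : lip0 f -> lip0 g -> lip0 (fun x => a * f x + g x).
Proof.
case=> f0 [Lf f_lip] [g0 [Lg g_lip]]; split; first by rewrite f0 g0 mulr0 addr0.
exists (`|a| * Lf + Lg) => x y.
have -> : a * f x + g x - (a * f y + g y) = a * (f x - f y) + (g x - g y) by ring.
rewrite (le_trans (ler_normD _ _)) // normrM mulrDl -mulrA lerD //.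
by rewrite ler_wpM2l.
Qed.

Lemma dnorm_has_sup mu : bounded_fnl mu ->
  has_sup [set r : R | exists f, lip1 f /\ r = `|mu f|].
Proof.
case=> C muC; split; first by exists `|mu (fun=> 0)|, (fun=> 0); split=> //; apply: lip1_zero.
by exists C => _ [f [f1 ->]]; apply: muC.
Qed.

Lemma dnorm_ge mu f : bounded_fnl mu -> lip1 f -> `|mu f| <= dnorm mu.
Proof. by move=> /dnorm_has_sup mu_sup f1; apply: sup_upper_bound => //; exists f. Qed.

Lemma dnorm_le mu (C : R) : (forall f, lip1 f -> `|mu f| <= C) -> dnorm mu <= C.
Proof.
move=> muC; have [ne _] := dnorm_has_sup (ex_intro _ C muC).
by apply: ge_sup ne _ => _ [f [f1 ->]]; apply: muC.
Qed.

Lemma dnorm_approx mu (e : R) : bounded_fnl mu -> 0 < e ->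
  exists f, lip1 f /\ dnorm mu - e < `|mu f|.
Proof.
move=> /dnorm_has_sup mu_sup e0.
by have [_ [f [f1 ->]] muf] := sup_adherent e0 mu_sup; exists f.
Qed.

Lemma bounded_fadd mu nu : bounded_fnl mu -> bounded_fnl nu -> bounded_fnl (fadd mu nu).
Proof.
case=> C muC [D nuD]; exists (C + D) => f f1.
by rewrite (le_trans (ler_normD _ _)) // lerD ?muC ?nuD.
Qed.

Lemma free_bounded mu : in_free mu -> bounded_fnl mu.
Proof. by case=> [[_ muC] _]. Qed.

Lemma free_linE mu (a : R) f g h : in_free mu -> lip0 f -> lip0 g ->
  (forall x, h x = a * f x + g x) -> mu h = a * mu f + mu g.
Proof. by case=> [[mu_lin _] _] f0 g0 /funext ->; apply: mu_lin. Qed.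

Lemma eval_free_dual h : lip1 h -> free_dual (fun mu : Fnl R => mu h).
Proof.
move=> h1; split=> //; exists 1 => mu mu_free.
by rewrite mul1r; apply: dnorm_ge (free_bounded mu_free) h1.
Qed.

Definition dipole : Fnl R := fun f => f right - f left.

Lemma dipole_le1 f : lip1 f -> `|dipole f| <= 1.
Proof. by case=> _ f_lip; rewrite (le_trans (f_lip _ _)) // dist_left !coordE addr0. Qed.

Lemma dipole_free : in_free dipole.
Proof.
split; first by split; [move=> a f g _ _; rewrite /dipole; ring | exists 1; apply: dipole_le1].
move=> e e0; exists [:: (right, 1); (left, -1)]; apply: le_lt_trans e0.
apply: dnorm_le => f _.
suff -> : dipole f - \sum_(p <- [:: (right, 1); (left, -1)]) p.2 * f p.1 = 0 by rewrite normr0.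
by rewrite !big_cons big_nil /dipole /=; ring.
Qed.

Lemma phi_lip1 : lip1 phi.
Proof.
have -> : phi = (fun r => phi r + 0 * 0) by apply: funext => r; rewrite mul0r addr0.
by apply: (@phi_perturb_lip1 (fun=> 0) 0) => // *; rewrite ?subrr ?normr0 ?mul0r.
Qed.

Lemma dipole_phi : dipole phi = 1.
Proof. by rewrite /dipole /phi /phi0 !coordE; lra. Qed.

Lemma dnorm_dipole : dnorm dipole = 1.
Proof.
apply/le_anti/andP; split; first exact: dnorm_le dipole_le1.
rewrite -[X in X <= _]normr1 -dipole_phi.
by apply: dnorm_ge phi_lip1; exists 1; apply: dipole_le1.
Qed.

Lemma bump_left_lip1 : lip1 (bump left).
Proof.
apply: bump_lip1 => [r s|]; first exact: (dist_left_right_lip r s).1.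
by rewrite dist_left !coordE; lra.
Qed.

Lemma bump_right_lip1 : lip1 (bump right).
Proof.
apply: bump_lip1 => [r s|]; first exact: (dist_left_right_lip r s).2.
by rewrite dist_right !coordE; lra.
Qed.

Lemma bump_left_left : bump left left = 1/4.
Proof. by rewrite bump_center // dist_left !coordE addr0. Qed.

Lemma bump_right_right : bump right right = 1/4.
Proof. by rewrite bump_center // dist_right !coordE subrr addr0. Qed.

Lemma bump_left_right : bump left right = 0.
Proof. by rewrite bump_far // dist_left !coordE; lra. Qed.

Lemma bump_right_left : bump right left = 0.
Proof. by rewrite bump_far // dist_right !coordE; lra. Qed.

Lemma lip1_left_le g : lip1 g -> `|g left| <= 3/8.
Proof.
by case=> g0 g_lip; have := g_lip (base R) left; rewrite g0 sub0r normrN dist_left !coordE add0r.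
Qed.

Lemma lip1_right_le g : lip1 g -> `|g right| <= 11/8.
Proof.
case=> g0 g_lip; have := g_lip (base R) right.
by rewrite g0 sub0r normrN dist_right !coordE subr0 => /le_trans; apply; lra.
Qed.

Definition vanish_ends g r : R :=
  g r - 4 * g left * bump left r - 4 * g right * bump right r.

Lemma vanish_ends_left g : vanish_ends g left = 0.
Proof. by rewrite /vanish_ends bump_left_left bump_right_left; lra. Qed.

Lemma vanish_ends_right g : vanish_ends g right = 0.
Proof. by rewrite /vanish_ends bump_left_right bump_right_right; lra. Qed.

Lemma vanish_ends_base g : lip1 g -> vanish_ends g (base R) = 0.
Proof.
by case=> g0 _; rewrite /vanish_ends g0 (proj1 bump_left_lip1) (proj1 bump_right_lip1); lra.
Qed.

Lemma vanish_ends_lip g : lip1 g -> forall r s,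
  `|vanish_ends g r - vanish_ends g s| <= 8 * dM r s.
Proof.
move=> g1 r s; have d0 := dM_ge0 r s.
have -> : vanish_ends g r - vanish_ends g s = (g r - g s)
    - 4 * g left * (bump left r - bump left s) - 4 * g right * (bump right r - bump right s).
  by rewrite /vanish_ends; ring.
have gL : `|4 * g left * (bump left r - bump left s)| <= 3/2 * dM r s.
  rewrite !normrM (ger0_norm (_ : 0 <= 4)) //.
  apply: ler_pM; rewrite ?mulr_ge0 //; last exact: (proj2 bump_left_lip1).
  by have := lip1_left_le g1; lra.
have gR : `|4 * g right * (bump right r - bump right s)| <= 11/2 * dM r s.
  rewrite !normrM (ger0_norm (_ : 0 <= 4)) //.
  apply: ler_pM; rewrite ?mulr_ge0 //; last exact: (proj2 bump_right_lip1).
  by have := lip1_right_le g1; lra.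
have := ler_normB (g r - g s - 4 * g left * (bump left r - bump left s))
                  (4 * g right * (bump right r - bump right s)).
have := ler_normB (g r - g s) (4 * g left * (bump left r - bump left s)).
have := proj2 g1 r s; lra.
Qed.

Lemma vanish_ends_lip0 g : lip1 g -> lip0 (vanish_ends g).
Proof. by move=> g1; split; [exact: vanish_ends_base | exists 8; exact: vanish_ends_lip]. Qed.

Lemma free_vanish_ends_ge Y g : in_free Y -> lip1 g ->
  `|Y g| - 3/2 * `|Y (bump left)| - 11/2 * `|Y (bump right)| <= `|Y (vanish_ends g)|.
Proof.
move=> Y_free g1.
have bl0 := lip1_lip0 bump_left_lip1; have br0 := lip1_lip0 bump_right_lip1.
have g0 := lip1_lip0 g1.
set g' := fun r => - (4 * g left) * bump left r + g r.
have Yg' : Y g' = - (4 * g left) * Y (bump left) + Y g by apply: free_linE.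
have Yk : Y (vanish_ends g) = - (4 * g right) * Y (bump right) + Y g'.
  by apply: free_linE => //; [exact: lip0_comb | move=> r; rewrite /vanish_ends /g'; ring].
have lin : Y g = Y (vanish_ends g) + 4 * g left * Y (bump left) + 4 * g right * Y (bump right).
  by rewrite Yk Yg'; ring.
have YL : `|4 * g left * Y (bump left)| <= 3/2 * `|Y (bump left)|.
  by rewrite normrM ler_wpM2r // normrM ger0_norm //; have := lip1_left_le g1; lra.
have YR : `|4 * g right * Y (bump right)| <= 11/2 * `|Y (bump right)|.
  by rewrite normrM ler_wpM2r // normrM ger0_norm //; have := lip1_right_le g1; lra.
have := ler_normD (Y (vanish_ends g) + 4 * g left * Y (bump left))
                  (4 * g right * Y (bump right)).
have := ler_normD (Y (vanish_ends g)) (4 * g left * Y (bump left)).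
rewrite -lin; lra.
Qed.

Lemma dnorm_dipole_add_ge Y g : in_free Y -> lip1 g ->
  1 + Y phi + `|Y (vanish_ends g)| / 64 <= dnorm (fadd dipole Y).
Proof.
move=> Y_free g1; set k := vanish_ends g.
have k0 : lip0 k := vanish_ends_lip0 g1.
have dnorm_ge_c (c : R) : `|c| * 8 <= 1/8 -> 1 + Y phi + c * Y k <= dnorm (fadd dipole Y).
  move=> cL; have f1 := phi_perturb_lip1 (vanish_ends_lip g1) (vanish_ends_left g)
                          (vanish_ends_right g) (vanish_ends_base g1) cL.
  have bdd := bounded_fadd (ex_intro _ 1 dipole_le1) (free_bounded Y_free).
  suff <- : fadd dipole Y (fun r => phi r + c * k r) = 1 + Y phi + c * Y k.
    exact: le_trans (ler_norm _) (dnorm_ge bdd f1).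
  have Yf : Y (fun r => phi r + c * k r) = c * Y k + Y phi.
    by apply: free_linE => // [|r]; [exact: lip1_lip0 phi_lip1 | rewrite addrC].
  rewrite /fadd Yf /dipole /k vanish_ends_left vanish_ends_right.
  by have := dipole_phi; rewrite /dipole; lra.
have [Yk0|Yk0] := leP 0 (Y k).
  by rewrite ger0_norm //; have := dnorm_ge_c (1/64); rewrite ger0_norm; lra.
by rewrite ltr0_norm //; have := dnorm_ge_c (-1/64); rewrite ler0_norm; lra.
Qed.

Lemma dipole_add_far Y : in_free Y -> `|1 - dnorm Y| < 1/200 ->
  `|Y phi| < 1/200 -> `|Y (bump left)| < 1/200 -> `|Y (bump right)| < 1/200 ->
  1 + 1/200 <= dnorm (fadd dipole Y).
Proof.
move=> Y_free; rewrite ltr_distlC => /andP[Y1 _] /ltr_normlP[Yphi _] Yl Yr.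
have [g [g1 Yg]] : exists g, lip1 g /\ dnorm Y - 1/200 < `|Y g|.
  by apply: dnorm_approx (free_bounded Y_free) _; lra.
have := dnorm_dipole_add_ge Y_free g1; have := free_vanish_ends_ge Y_free g1.
lra.
Qed.

End FreeSpaceNotWASQ.

Theorem mainTheorem1 (R : realType) : ~ free_WASQ R.
Proof.
move=> /(_ _ (dipole_free R) (dnorm_dipole R)) [y [y_free [/cvgrPdist_lt xy1 [_ [/cvgrPdist_lt y1 y_weak]]]]].
have e0 : 0 < 1/200 :> R by lra.
have /cvgr0Pnorm_lt y_phi := y_weak _ (eval_free_dual (phi_lip1 R)).
have /cvgr0Pnorm_lt y_left := y_weak _ (eval_free_dual (bump_left_lip1 R)).
have /cvgr0Pnorm_lt y_right := y_weak _ (eval_free_dual (bump_right_lip1 R)).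
have /filter_ex[i [xyi [yi [phii [li ri]]]]] : \forall i \near \oo,
    `|1 - dnorm (fadd (@dipole R) (y i))| < 1/200 /\ `|1 - dnorm (y i)| < 1/200 /\
    `|y i (@phi R)| < 1/200 /\ `|y i (bump (left R))| < 1/200 /\
    `|y i (bump (right R))| < 1/200.
  near=> i; do 4?split; near: i.
  - exact: xy1.
  - exact: y1.
  - exact: y_phi.
  - exact: y_left.
  - exact: y_right.
have := dipole_add_far (y_free i).1 yi phii li ri.
by move: xyi; rewrite ltr_distlC => /andP[_]; lra.
Unshelve. all: by end_near.
Qed.
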